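(* Let $f:\mathbb{N}\to\mathbb{N}$ be an unbounded non-decreasing function with $f(x)\le x$ for all $x$, and define $g:\mathbb{N}\to\mathbb{N}$ by $g(p)=\max\{i: f(i)\le p\}$. Then for every finite simple graph $G$ and every non-negative integer $r$, $$\nabla_r(G)\le N_f(G,2r+1)^{2r+1}\, g(2r+1)^2.$$
   Context: For a finite simple graph $G$, a function $f:\mathbb{N}\to\mathbb{N}$ and a positive integer $p$, $N_f(G,p)$ denotes the minimum number of colours in a colouring of the edges of $G$ such that every cycle $\gamma$ of $G$ receives at least $\min(f(|\gamma|),p+1)$ distinct colours, where $|\gamma|$ is the length of $\gamma$. A simple graph $H$ is a shallow minor of $G$ at depth $r$ if there are pairwise vertex-disjoint subtrees $T_1,\dots,T_k$ of $G$, each having a root from which every vertex of the tree is at distance at most $r$ in the tree, such that $H$ is isomorphic to a subgraph of the graph with vertex set $\{T_1,\dots,T_k\}$ in which $T_i,T_j$ are adjacent iff some edge of $G$ joins a vertex of $T_i$ to a vertex of $T_j$. $\nabla_r(G)$ is the maximum of $\|H\|/|H|$ over all shallow minors $H$ of $G$ at depth $r$, where $\|H\|$ is the number of edges and $|H|$ the number of vertices. *)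

From mathcomp Require Import all_boot.
Set Implicit Arguments. Unset Strict Implicit. Unset Printing Implicit Defensive.

Definition simple_graph (T : finType) (e : rel T) : Prop :=
  symmetric e /\ irreflexive e.

(* A cycle of G, as the cyclic sequence of its (distinct) vertices v_0 ... v_{n-1},
   n >= 3, with v_i ~ v_{i+1} and v_{n-1} ~ v_0.  Its length is [size s]. *)
Definition is_cycle (T : finType) (e : rel T) (s : seq T) : bool :=
  [&& 3 <= size s, uniq s & cycle e s].

Definition cycle_edges (T : finType) (s : seq T) : seq (T * T) :=
  zip s (rot 1 s).

Definition ncolours (T : finType) (K : eqType) (c : T -> T -> K) (s : seq T) : nat :=
  size (undup [seq c xy.1 xy.2 | xy <- cycle_edges s]).

(* An edge colouring
   is a symmetric function on pairs of vertices (only its values on edges matter). *)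
Definition good_colouring_exists (f : nat -> nat) (T : finType) (e : rel T)
    (p k : nat) : Prop :=
  exists c : T -> T -> 'I_k,
    (forall x y, c x y = c y x) /\
    (forall s, is_cycle e s -> minn (f (size s)) p.+1 <= ncolours c s).

Definition is_Nf (f : nat -> nat) (T : finType) (e : rel T) (p k : nat) : Prop :=
  good_colouring_exists f e p k /\
  (forall k', good_colouring_exists f e p k' -> k <= k').

(* A depth-r model: k pairwise vertex-disjoint branch sets B i, each containing a
   root (root i), such that every vertex of B i is joined to root i by a path of
   length <= r inside B i (equivalently, B i spans a subtree of G of radius <= r
   around root i). *)
Definition shallow_model (T : finType) (e : rel T) (r k : nat)
    (root : 'I_k -> T) (B : 'I_k -> {set T}) : Prop :=
  (forall i j, i != j -> [disjoint B i & B j]) /\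
  (forall i, root i \in B i) /\
  (forall i v, v \in B i ->
     exists q : seq T, [/\ path e v q, last v q = root i, size q <= r
                          & all (fun x => x \in B i) q]).

Definition minor_adj (T : finType) (e : rel T) (k : nat) (B : 'I_k -> {set T})
    (i j : 'I_k) : bool :=
  [exists x, exists y, [&& x \in B i, y \in B j & e x y]].

Definition shallow_minor (T : finType) (e : rel T) (r : nat)
    (V : finType) (eH : rel V) : Prop :=
  exists (k : nat) (root : 'I_k -> T) (B : 'I_k -> {set T}) (phi : V -> 'I_k),
    [/\ shallow_model e r root B, injective phi
      & forall u v, eH u v -> minor_adj e B (phi u) (phi v)].

(* Number of edges ||H|| of a simple graph (each edge counted as two ordered pairs). *)
Definition nedges (V : finType) (eH : rel V) : nat :=
  #|[set uv : V * V | eH uv.1 uv.2]| %/ 2.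

(* nabla_r(G) <= X : every shallow minor H at depth r (with |H| > 0) has
   ||H|| / |H| <= X. *)
Definition nabla_le (T : finType) (e : rel T) (r X : nat) : Prop :=
  forall (V : finType) (eH : rel V), simple_graph eH -> shallow_minor e r eH ->
    0 < #|V| -> nedges eH <= X * #|V|.

From mathcomp Require Import all_boot zify.
Set Implicit Arguments. Unset Strict Implicit. Unset Printing Implicit Defensive.

(* Let p = 2r+1 and let c be a k-colouring of the edges of G in which every
   cycle C sees at least min(f|C|, p+1) colours.  A cycle seeing at most p
   colours then has f|C| <= p, i.e. |C| <= g(p).
   Fix a depth-r model (B_i, root_i) of a shallow minor H.  For each p-tuple t
   of colours let core_t(i) be the component of root_i in the subgraph of
   G[B_i] formed by the edges coloured from t, and let H_t be the subgraph of H
   whose edges uv are realised by a t-coloured edge between core_t(phi u) and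
   core_t(phi v).  Then
   (1) every edge of H lies in some H_t: the two root paths (at most r edges
       each) and the realising edge use at most 2r+1 = p colours;
   (2) every cycle of H_t lifts, by threading paths through the cores, to a
       t-coloured cycle of G at least as long, so H_t has circumference <= g(p);
   (3) a graph of circumference <= L is L-degenerate (the last vertex of a
       maximal path has all its neighbours on that path), so it has <= L|V|
       edges.
   Summing over the k^p tuples gives ||H|| <= k^p g(p) |V| <= k^p g(p)^2 |V|. *)

Section Degeneracy.
Variables (V : finType) (h : rel V).
Hypothesis h_sym : symmetric h.

Definition nbr (A : {set V}) (v : V) : {set V} := [set w in A | h v w].

Definition arcs (A : {set V}) : {set V * V} :=
  [set uv | [&& uv.1 \in A, uv.2 \in A & h uv.1 uv.2]].

Lemma arcs_delete (A : {set V}) v : v \in A ->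
  #|arcs A| <= #|arcs (A :\ v)| + 2 * #|nbr A v|.
Proof.
move=> vA.
have sub : arcs A \subset arcs (A :\ v) :|: (pair v @: nbr A v)
                          :|: ((fun w => (w, v)) @: nbr A v).
  apply/subsetP => -[x y]; rewrite /arcs !inE /= => /and3P[xA yA hxy].
  have [xv|xv] := eqVneq x v.
    subst x; apply/orP; left; apply/orP; right; apply/imsetP; exists y => //.
    by rewrite inE yA hxy.
  have [yv|yv] := eqVneq y v.
    subst y; apply/orP; right; apply/imsetP; exists x => //.
    by rewrite inE xA h_sym hxy.
  by rewrite xA yA hxy.
apply: leq_trans (subset_leq_card sub) _; rewrite mul2n -addnn addnA.
apply: leq_trans (leq_card_setU _ _).1 _; apply: leq_add; last exact: leq_imset_card.
apply: leq_trans (leq_card_setU _ _).1 _; apply: leq_add => //; exact: leq_imset_card.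
Qed.

Lemma arcs_degenerate D :
  (forall A : {set V}, A != set0 -> exists2 v, v \in A & #|nbr A v| <= D) ->
  forall A, #|arcs A| <= 2 * D * #|A|.
Proof.
move=> low A; have [n leAn] := ubnP #|A|; elim: n A leAn => // n IH A leAn.
have [->|A_n0] := eqVneq A set0.
  by rewrite cards0 muln0 leqn0 cards_eq0; apply/eqP/setP => uv; rewrite !inE.
have [v vA low_v] := low A A_n0.
rewrite (cardsD1 v A) vA add1n ltnS in leAn.
have IHv := IH _ leAn.
apply: leq_trans (arcs_delete vA) _; rewrite (cardsD1 v A) vA; nia.
Qed.

Hypothesis h_irr : irreflexive h.

(* If all the neighbours in A of the end z of a duplicate-free path lie on the
   path, then the path closes, at the first neighbour of z, into a cycle with
   more vertices than z has neighbours. *)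
Lemma cycle_at_path_end (A : {set V}) x q (z := last x q) :
  uniq (x :: q) -> path h x q -> {subset nbr A z <= x :: q} -> nbr A z != set0 ->
  exists2 s, uniq s && cycle h s & #|nbr A z| < size s.
Proof.
move=> uq pq nbr_on nz_n0.
set s := x :: q in uq nbr_on *; have zs : last x s = z by [].
have srt : sorted h s by [].
have has_nbr : has (h z) s.
  have [w wn] := set0Pn _ nz_n0; apply/hasP; exists w; first exact: nbr_on.
  by move: wn; rewrite inE => /andP[].
set i := find (h z) s; have i_lt : i < size s by rewrite -has_find.
have ds := drop_nth x i_lt; set y := nth x s i in ds.
have hzy : h z y := nth_find x has_nbr.
have zl : last y (drop i.+1 s) = z.
  by rewrite -zs -[s in last x s](cat_take_drop i) last_cat ds.
have p_rest : path h y (drop i.+1 s).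
  by move: srt; rewrite -[s in sorted _ s](cat_take_drop i) ds => /cat_sorted2[].
exists (drop i s); first by rewrite drop_uniq // ds /= rcons_path p_rest zl hzy.
have nbr_sub : nbr A z \subset [predD1 drop i s & z].
  apply/subsetP => w wn; have hw : h z w by move: wn; rewrite inE => /andP[].
  rewrite inE; apply/andP; split; first by apply: contraTneq hw => ->; rewrite h_irr.
  have : w \in take i s ++ drop i s by rewrite cat_take_drop; exact: nbr_on.
  rewrite mem_cat => /orP[wt|//]; have : has (h z) (take i s) by apply/hasP; exists w.
  by rewrite has_take // ltnn.
have z_in : z \in drop i s by rewrite ds -zl mem_last.
have /card_uniqP <- := drop_uniq i uq.
have -> : #|drop i s| = (z \in drop i s) + #|[predD1 drop i s & z]| := cardD1 _ _.
by rewrite z_in add1n ltnS; exact: subset_leq_card nbr_sub.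
Qed.

Lemma low_degree_vertex L : 0 < L ->
  (forall s, is_cycle h s -> size s <= L) ->
  forall A : {set V}, A != set0 -> exists2 v, v \in A & #|nbr A v| <= L.
Proof.
move=> L_gt0 short A A_n0.
have [/exists_inP[v vA low_v] | /exists_inPn high] :=
  boolP [exists v in A, #|nbr A v| <= L]; first by exists v.
have {}high v : v \in A -> L < #|nbr A v| by move=> vA; rewrite ltnNge high.
(* Then every duplicate-free path in A extends, which is absurd beyond #|A|. *)
suff [x [q /and4P[uq _ aq long]]] : exists x q,
    [&& uniq (x :: q), path h x q, all [in A] (x :: q) & #|A| <= size q].
  have in_A : {subset x :: q <= enum A} by move=> w /(allP aq); rewrite mem_enum.
  by have := uniq_leq_size uq in_A; rewrite -cardE ltnNge long.
elim: #|A| => [|m [x [q /and4P[uq pq aq long]]]].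
  by have [v vA] := set0Pn _ A_n0; exists v, [::]; rewrite /= vA.
have zA : last x q \in A by apply: (allP aq); apply: mem_last.
have [/exists_inP[w wn w_off] | /exists_inPn on_path] :=
  boolP [exists w in nbr A (last x q), w \notin x :: q].
  move: wn; rewrite inE => /andP[wA hzw]; exists x, (rcons q w).
  rewrite -rcons_cons rcons_uniq w_off uq rcons_path pq hzw all_rcons wA aq.
  by rewrite size_rcons ltnS long.
have nz_n0 : nbr A (last x q) != set0 by rewrite -card_gt0 (leq_trans _ (high _ zA)).
have [s /andP[us cs] big] := cycle_at_path_end uq pq
  (fun w wn => negbNE (on_path w wn)) nz_n0.
have s3 : 3 <= size s by have := high _ zA; lia.
have := short s; rewrite /is_cycle s3 us cs => /(_ isT).
by rewrite leqNgt (ltn_trans (high _ zA) big).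
Qed.

Lemma arcs_short_cycles L : 0 < L ->
  (forall s, is_cycle h s -> size s <= L) -> #|arcs [set: V]| <= 2 * L * #|V|.
Proof.
by move=> L_gt0 short; rewrite -cardsT; apply/arcs_degenerate/low_degree_vertex.
Qed.

End Degeneracy.

Lemma card_covered (I T : finType) (F : I -> {set T}) (S : {set T}) N :
  S \subset \bigcup_i F i -> (forall i, #|F i| <= N) -> #|S| <= #|I| * N.
Proof.
move=> S_sub F_small; apply: leq_trans (subset_leq_card S_sub) _.
apply: (@leq_trans (\sum_i #|F i|)).
  elim/big_ind2: _ => [|n A n' A' hA hA'|//]; first by rewrite cards0.
  exact: leq_trans (leq_card_setU A A').1 (leq_add hA hA').
by rewrite -sum_nat_const; apply: leq_sum.
Qed.

Lemma tuple_covering (K : finType) (d : K) (cl : seq K) p :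
  size cl <= p -> exists t : {ffun 'I_p -> K}, {subset cl <= codom t}.
Proof.
move=> cl_p; exists [ffun i : 'I_p => nth d cl i] => z zcl.
have i_lt : index z cl < p by apply: leq_trans cl_p; rewrite index_mem.
by have := codom_f [ffun i : 'I_p => nth d cl i] (Ordinal i_lt); rewrite ffunE nth_index.
Qed.

Lemma cycle_edges_rel (T : finType) (R : rel T) (s : seq T) :
  cycle R s -> all (fun xy => R xy.1 xy.2) (cycle_edges s).
Proof.
case: s => [|x s] //=; rewrite /cycle_edges rot1_cons.
elim: s x {1 3}x => [|y s IH] x0 x /=; first by rewrite andbT.
by case/andP=> -> /IH.
Qed.

Section Threading.
Variables (U T : eqType) (R : rel T) (a : U -> T) (fp : U -> seq T).

Definition thread (s : seq U) : seq T := flatten [seq a u :: fp u | u <- s].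

(* Threading never shortens: each u contributes at least its start a u. *)
Lemma size_thread s : size s <= size (thread s).
Proof. by elim: s => //= u s IH; rewrite size_cat /= ltnS (leq_trans IH) ?leq_addl. Qed.

Lemma thread_path u0 s :
  path (fun u v => R (last (a u) (fp u)) (a v)) u0 s ->
  (forall u, u \in u0 :: s -> path R (a u) (fp u)) ->
  path R (a u0) (fp u0 ++ thread s) /\
  last (a u0) (fp u0 ++ thread s) = last (a (last u0 s)) (fp (last u0 s)).
Proof.
elim: s u0 => [|v s IH] u0 /= => [_ pu | /andP[link ps] pu].
  by rewrite cats0; split=> //; apply: pu; rewrite inE eqxx.
have [IH1 IH2] : path R (a v) (fp v ++ thread s) /\
    last (a v) (fp v ++ thread s) = last (a (last v s)) (fp (last v s)).
  by apply: IH ps _ => u us; apply: pu; rewrite inE us orbT.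
by rewrite cat_path /= link IH1 pu ?mem_head // last_cat /= IH2.
Qed.

Lemma thread_cycle (s : seq U) :
  uniq s -> (forall u, u \in s -> path R (a u) (fp u)) ->
  (forall u, u \in s -> R (last (a u) (fp u)) (a (next s u))) ->
  cycle R (thread s).
Proof.
move=> us pu link.
have : cycle (fun u v => R (last (a u) (fp u)) (a v)) s.
  by apply: cycle_from_next => // u /link.
case: s us pu {link} => [|u0 s] //= _ pu; rewrite rcons_path => /andP[ps last_link].
have [P1 P2] := thread_path ps pu.
by rewrite rcons_path P1 P2.
Qed.

Lemma thread_uniq (s : seq U) (BB : U -> pred T) :
  uniq s -> (forall u, u \in s -> uniq (a u :: fp u)) ->
  (forall u, u \in s -> all (BB u) (a u :: fp u)) ->
  (forall u v x, u \in s -> v \in s -> BB u x -> BB v x -> u = v) ->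
  uniq (thread s).
Proof.
elim: s => [|u s IH] // /andP[us uss] uu inB disj.
have in_s v : v \in s -> v \in u :: s by move=> vs; rewrite inE vs orbT.
have -> : thread (u :: s) = (a u :: fp u) ++ thread s by [].
rewrite cat_uniq uu ?mem_head // IH //; first last.
- by move=> v w x /in_s vs /in_s ws; apply: disj.
- by move=> v /in_s; apply: inB.
- by move=> v /in_s; apply: uu.
rewrite andbT; apply/hasPn => x /flattenP [w /mapP [v vs ->]] xw; apply/negP => xu.
have := disj u v x (mem_head _ _) (in_s v vs).
rewrite (allP (inB u (mem_head _ _)) x xu) (allP (inB v (in_s v vs)) x xw).
by move=> /(_ isT isT) uv; move: us; rewrite uv vs.
Qed.

End Threading.

Lemma few_colours_short_cycle (f g : nat -> nat) (T : finType) (e : rel T) k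
    (c : T -> T -> 'I_k) p :
  (forall i, f i <= p -> i <= g p) ->
  (forall s, is_cycle e s -> minn (f (size s)) p.+1 <= ncolours c s) ->
  forall s, is_cycle e s -> ncolours c s <= p -> size s <= g p.
Proof.
move=> g_max good s cs few; apply: g_max; rewrite leqNgt; apply/negP => big.
by have := leq_trans (good s cs) few; rewrite (minn_idPr big) ltnn.
Qed.

Section ColourClasses.
Variables (T : finType) (e : rel T) (k p : nat) (c : T -> T -> 'I_k).
Hypotheses (e_sym : symmetric e) (c_sym : forall x y, c x y = c y x).
Variables (m r : nat) (root : 'I_m -> T) (B : 'I_m -> {set T}).
Hypothesis B_disj : forall i j, i != j -> [disjoint B i & B j].
Hypothesis B_radius : forall i v, v \in B i -> exists q : seq T,
  [/\ path e v q, last v q = root i, size q <= r & all (fun x => x \in B i) q].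
Variables (V : finType) (eH : rel V) (phi : V -> 'I_m).
Hypotheses (eH_sym : symmetric eH) (eH_irr : irreflexive eH).
Hypotheses (phi_inj : injective phi)
  (phi_adj : forall u v, eH u v -> minor_adj e B (phi u) (phi v)).

Implicit Types t : {ffun 'I_p -> 'I_k}.

Definition col t x y := c x y \in codom t.

Definition inner t i := [rel x y | [&& x \in B i, y \in B i, e x y & col t x y]].

Definition core t i := [set w in B i | connect (inner t i) w (root i)].

Definition core_adj t i j :=
  [exists x, exists y, [&& x \in core t i, y \in core t j, e x y & col t x y]].
Definition class_graph t := [rel u v | eH u v && core_adj t (phi u) (phi v)].

Lemma col_sym t x y : col t x y = col t y x.
Proof. by rewrite /col c_sym. Qed.

Lemma inner_sym t i : symmetric (inner t i).
Proof. by move=> x y /=; rewrite e_sym col_sym; case: (x \in B i); case: (y \in B i). Qed.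

Lemma inner_path_in t i x q : path (inner t i) x q -> all [in B i] q.
Proof. by elim: q x => //= y q IH x /andP[/and4P[_ yB _ _] /IH ->]; rewrite andbT. Qed.

Lemma core_path t i a b : a \in core t i -> b \in core t i ->
  exists2 q, path (inner t i) a q && uniq (a :: q) & last a q = b.
Proof.
rewrite !inE => /andP[_ a_root] /andP[_ b_root].
have /connectP[q pq ->] : connect (inner t i) a b.
  by apply: connect_trans a_root _; rewrite (sym_connect_sym (inner_sym t i)).
by case: (shortenP pq) => q' pq' uq' _; exists q' => //; rewrite pq'.
Qed.

Lemma root_path_core t i w q : w \in B i -> path e w q -> last w q = root i ->
  all [in B i] q -> {subset [seq c z.1 z.2 | z <- zip (w :: q) q] <= codom t} ->
  w \in core t i.
Proof.
move=> wB pq lq aq cols; rewrite inE wB /=; apply/connectP; exists q => //.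
elim: q w wB pq {lq} aq cols => //= y q IH w wB /andP[ewy pq] /andP[yB aq] cols.
rewrite wB yB ewy /col cols ?mem_head //= IH // => z zq.
by apply: cols; rewrite inE zq orbT.
Qed.

Lemma lift_cycle t s : is_cycle (class_graph t) s -> exists W,
  [/\ is_cycle e W, size s <= size W & all (fun xy => col t xy.1 xy.2) (cycle_edges W)].
Proof.
case/and3P=> s3 us cs.
have /fin_all_exists[xy xy_ok] : forall u, exists xy : T * T, u \in s ->
    [&& xy.1 \in core t (phi u), xy.2 \in core t (phi (next s u)),
        e xy.1 xy.2 & col t xy.1 xy.2].
  move=> u; have [u_s|] := boolP (u \in s); last first.
    by exists (root (phi u), root (phi u)) => /negP.
  have /andP[_ /existsP[x /existsP[y ok]]] := next_cycle cs u_s.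
  by exists (x, y).
pose a u := (xy (prev s u)).2; pose b u := (xy u).1.
have a_core u : u \in s -> a u \in core t (phi u).
  move=> u_s; have := xy_ok (prev s u); rewrite mem_prev next_prev //.
  by move=> /(_ u_s) /and4P[].
have /fin_all_exists[fp fp_ok] : forall u, exists q : seq T, u \in s ->
    [&& path (inner t (phi u)) (a u) q, uniq (a u :: q) & last (a u) q == b u].
  move=> u; have [u_s|] := boolP (u \in s); last first.
    by exists [::] => /negP.
  have /and4P[b_core _ _ _] := xy_ok u u_s.
  have [q /andP[pq uq] lq] := core_path (a_core u u_s) b_core.
  by exists q => _; rewrite pq uq lq eqxx.
pose W := thread a fp s.
have uW : uniq W.
  apply: (thread_uniq (BB := fun u => [in B (phi u)])) => //.
  - by move=> u /fp_ok /and3P[].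
  - move=> u u_s /=; have /and3P[pu _ _] := fp_ok u u_s.
    by rewrite (inner_path_in pu) andbT; have := a_core u u_s; rewrite inE => /andP[].
  - move=> u v x _ _ xu xv; apply: phi_inj; apply/eqP/negPn/negP => ne.
    by have := disjointFr (B_disj ne) xu; rewrite [x \in _]xv.
have cW : cycle [rel x y | e x y && col t x y] W.
  apply: thread_cycle => // u u_s.
    have /and3P[pu _ _] := fp_ok u u_s.
    by apply: sub_path pu => x y /and4P[_ _ exy cxy]; rewrite /= exy.
  have /and3P[_ _ /eqP ->] := fp_ok u u_s.
  by rewrite /a prev_next //= /b; have /and4P[_ _ -> ->] := xy_ok u u_s.
exists W; split; last by apply: sub_all (cycle_edges_rel cW) => uv /andP[].
  rewrite /is_cycle uW (leq_trans s3 (size_thread a fp s)) /=.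
  by apply: sub_cycle cW => x y /andP[].
exact: size_thread.
Qed.

Lemma ncolours_tuple t W : all (fun xy => col t xy.1 xy.2) (cycle_edges W) ->
  ncolours c W <= p.
Proof.
move=> cols; rewrite /ncolours -[p]card_ord -(size_codom t).
apply: uniq_leq_size (undup_uniq _) _ => z; rewrite mem_undup.
by case/mapP=> xy /(allP cols) ? ->.
Qed.

Variable L : nat.
Hypothesis few_colours_short :
  forall s, is_cycle e s -> ncolours c s <= p -> size s <= L.

Lemma class_short_cycles t s : is_cycle (class_graph t) s -> size s <= L.
Proof.
case/lift_cycle=> W [cW sW cols].
by apply: leq_trans sW (few_colours_short cW (ncolours_tuple cols)).
Qed.

Lemma class_graph_sym t : symmetric (class_graph t).
Proof.
move=> u v /=; rewrite eH_sym; congr (_ && _).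
by apply/existsP/existsP => -[x /existsP[y /and4P[xc yc exy cxy]]];
  exists y; apply/existsP; exists x; rewrite yc xc e_sym exy col_sym.
Qed.

Lemma class_graph_irr t : irreflexive (class_graph t).
Proof. by move=> u /=; rewrite eH_irr. Qed.

Lemma class_cover : 2 * r + 1 <= p -> forall u v, eH u v -> exists t, class_graph t u v.
Proof.
move=> p_ge u v huv.
have /existsP[x /existsP[y /and3P[xB yB exy]]] := phi_adj huv.
have [qx [pqx lqx sqx aqx]] := B_radius xB.
have [qy [pqy lqy sqy aqy]] := B_radius yB.
pose colours w q := [seq c z.1 z.2 | z <- zip (w :: q) q].
have size_colours w q : size (colours w q) = size q.
  by rewrite size_map size_zip /=; apply/minn_idPr.
pose cl := colours x qx ++ c x y :: colours y qy.
have [t t_cl] : exists t : {ffun 'I_p -> 'I_k}, {subset cl <= codom t}.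
  by apply: (tuple_covering (c x y)); rewrite size_cat /= !size_colours; lia.
have xc : x \in core t (phi u).
  by apply: (root_path_core xB pqx) => // z zc; apply: t_cl; rewrite mem_cat zc.
have yc : y \in core t (phi v).
  by apply: (root_path_core yB pqy) => // z zc; apply: t_cl; rewrite mem_cat in_cons zc !orbT.
exists t; rewrite /= huv; apply/existsP; exists x; apply/existsP; exists y.
by rewrite xc yc exy /col t_cl // mem_cat mem_head orbT.
Qed.

Lemma minor_arcs_bound : 2 * r + 1 <= p -> 0 < L ->
  #|[set uv : V * V | eH uv.1 uv.2]| <= k ^ p * (2 * L * #|V|).
Proof.
move=> p_ge L_gt0.
rewrite -[k in k ^ _]card_ord -[p in _ ^ p]card_ord -card_ffun.
apply: (card_covered (F := fun t => arcs (class_graph t) [set: V])).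
  apply/subsetP => -[u v]; rewrite inE /= => huv.
  have [t ht] := class_cover p_ge huv.
  by apply/bigcupP; exists t => //; rewrite !inE.
by move=> t; apply: (arcs_short_cycles (class_graph_sym t) (class_graph_irr t) L_gt0);
  apply: class_short_cycles.
Qed.

End ColourClasses.

Theorem mainTheorem3
  (f g : nat -> nat)
  (f_le : forall x, f x <= x)
  (f_mono : forall x y, x <= y -> f x <= f y)
  (f_unbounded : forall m, exists x, m < f x)
  (g_def : forall p, f (g p) <= p /\ (forall i, f i <= p -> i <= g p))
  (T : finType) (e : rel T) (HG : simple_graph e)
  (r k : nat) (Hk : is_Nf f e (2 * r + 1) k) :
  nabla_le e r (k ^ (2 * r + 1) * g (2 * r + 1) ^ 2).
Proof.
move: Hk; set p := 2 * r + 1 => -[[c [c_sym c_good]] _].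
(* g p >= p > 0, since f p <= p. *)
have g_pos : 0 < g p by apply: leq_trans ((g_def p).2 p (f_le p)); rewrite /p addn1.
have short := few_colours_short_cycle (g_def p).2 c_good.
move=> V eH [eH_sym eH_irr] [m [root [B [phi [[B_disj [_ B_radius]] phi_inj phi_adj]]]]] _.
have arcs_le := minor_arcs_bound HG.1 c_sym B_disj B_radius eH_sym eH_irr phi_inj
  phi_adj short (leqnn p) g_pos.
(* ||H|| is half the number of arcs, and g p <= g p ^ 2. *)
rewrite /nedges; apply: leq_trans (leq_div2r 2 arcs_le) _.
set K := k ^ p; have -> : K * (2 * g p * #|V|) = K * g p * #|V| * 2 by lia.
rewrite mulnK // expnS; nia.
Qed.
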